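(* Let $\{\mathbf{y}(k)\}_{k\in\mathbb{Z}_+}$ be generated by the distributed quantized average consensus and weight-balancing algorithm described in the context on a strongly connected digraph, under the stated step-size and range conditions. Then for each $i\in\mathcal{V}$ there exist $y_{i,\min},y_{i,\max}\in\mathbb{R}$ such that $y_{i,\min}\le y_i(k)\le y_{i,\max}$ for all $k\in\mathbb{Z}_+$.
   Context: $\mathcal{G}=(\mathcal{V},\mathcal{E})$, $\mathcal{V}=\{1,\dots,N\}$, no self-loops, strongly connected; $\mathcal{N}_i^-=\{j:(j,i)\in\mathcal{E}\}$, $\mathcal{N}_i^+=\{j:(i,j)\in\mathcal{E}\}$, $d_i^+=|\mathcal{N}_i^+|$. Algorithm: given $q_{\min}<q_{\max}$ and initial values $y_i(0)$ with $\bar y(0)=\frac1N\sum_i y_i(0)\in[q_{\min},q_{\max}]$; $a_{ij}(0)=1$ if $j\in\mathcal{N}_i^-$, else $0$. $\gamma(k)=2^{-n}$ for $2^n-1\le k\le 2^{n+1}-2$; $\alpha(k)>0$ nonincreasing with $\sum\alpha(k)=\infty$, $\sum\alpha(k)^2<\infty$. At step $k$: $b_i(k)=\sum_{j\in\mathcal{N}_i^-}a_{ij}(k)-\sum_{j\in\mathcal{N}_i^+}a_{ji}(k)$; $n_i(k)=\mathcal{I}\{b_i(k)\ge d_i^+\gamma(k)\}$; $\tilde y_i(k)=\min\{\max\{y_i(k),q_{\min}\},q_{\max}\}$; $x_i(k)=q_{\max}$ with probability $p_i(k)=\frac{\tilde y_i(k)-q_{\min}}{q_{\max}-q_{\min}}$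 and $q_{\min}$ otherwise; $a_{ij}(k+1)=a_{ij}(k)+n_j(k)\gamma(k)$ for $j\in\mathcal{N}_i^-$; $y_i(k+1)=y_i(k)+\alpha(k)\sum_{j\in\mathcal{N}_i^-}a_{ij}(k)(x_j(k)-x_i(k))+\alpha(k)b_i(k)x_i(k)$. *)

From HB Require Import structures.
From mathcomp Require Import all_boot all_order all_algebra.
From mathcomp Require Import all_classical all_reals all_analysis.
Set Implicit Arguments. Unset Strict Implicit. Unset Printing Implicit Defensive.
Import Order.TTheory GRing.Theory Num.Theory.
Local Open Scope ring_scope.

Section Algo.
Variables (R : realType) (N : nat) (E : rel 'I_N).
(* (j,i) \in E  is written  E j i.  In-neighbours of i: j with E j i;
   out-neighbours of i: j with E i j. *)

Definition outdeg (i : 'I_N) : nat := #|[pred j | E i j]|.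

Definition imbalance (a : 'I_N -> 'I_N -> R) (i : 'I_N) : R :=
  \sum_(j | E j i) a i j - \sum_(j | E i j) a j i.

Definition nflag (a : 'I_N -> 'I_N -> R) (g : R) (i : 'I_N) : bool :=
  (outdeg i)%:R * g <= imbalance a i.

Definition sat (qmin qmax y : R) : R := Num.min (Num.max y qmin) qmax.

(* probability p_i(k) that x_i(k) = qmax *)
Definition prob_max (qmin qmax y : R) : R :=
  (sat qmin qmax y - qmin) / (qmax - qmin).

End Algo.

From HB Require Import structures.
From mathcomp Require Import all_boot all_order all_algebra.
From mathcomp Require Import all_classical all_reals all_analysis.
From mathcomp Require Import zify ring lra.

(* Every out-weight a_ij(k) of node j equals 1 + g_j(k), where g_j(k) is the
   total increment node j has made so far.  A node never loses a nonnegative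
   imbalance, so the total negative imbalance D(k) is nonincreasing and bounds
   every |b_i(k)|; a node with negative imbalance has never incremented, and
   propagating g_j <= D(0) + |E| (1 + g_i) along a path to it bounds all the
   weights.  Hence the steps at which some node fires carry finite gamma-mass,
   while every dyadic block carries gamma-mass 1: eventually each block contains
   a quiet step t, at which D(t) <= |E| gamma(t).  So D(k) <= 2 |E| gamma(k)
   eventually, and sum alpha D <= sum (alpha^2 + gamma^2) / 2 < oo.
   Above q_max (below q_min) the saturation forces x_i = q_max (q_min), so only
   the imbalance term alpha(k) b_i(k) x_i(k) can push y_i further out; its total
   is at most (|q_min| + |q_max|) sum alpha D, and single steps are bounded
   because the weights are. *)

Set Implicit Arguments.
Unset Strict Implicit.
Unset Printing Implicit Defensive.

Import Order.TTheory GRing.Theory Num.Theory.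
Import numFieldNormedType.Exports.
Local Open Scope classical_set_scope.
Local Open Scope ring_scope.

Lemma eventually_false_of_bounded_count (P : nat -> bool) (B : nat) :
  (forall M, (\sum_(0 <= n < M) P n <= B)%N) ->
  exists n0, forall n, (n0 <= n)%N -> ~~ P n.
Proof.
move=> count_le; apply: contrapT => /forallNP often.
suff count_ge c : exists M, (c <= \sum_(0 <= n < M) P n)%N.
  by have [M] := count_ge B.+1; rewrite ltnNge count_le.
elim: c => [|c [M leM]]; first by exists 0%N.
have /existsNP[n /not_implyP[Mn /negP/negPn Pn]] := often M.
exists n.+1; rewrite big_nat_recr //= Pn addn1 ltnS (leq_trans leM) //.
by rewrite [leqRHS](big_cat_nat (n := M)) //= leq_addr.
Qed.

Lemma dyadic_block_of t : exists n, ((2 ^ n).-1 <= t < (2 ^ n.+1).-1)%N.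
Proof.
exists (trunc_log 2 t.+1).
have /andP[] : (2 ^ trunc_log 2 t.+1 <= t.+1 < 2 ^ (trunc_log 2 t.+1).+1)%N.
  by rewrite trunc_logP // trunc_log_ltn.
lia.
Qed.

Lemma size_dyadic_block n : ((2 ^ n.+1).-1 - (2 ^ n).-1 = 2 ^ n)%N.
Proof. have : (0 < 2 ^ n)%N by rewrite expn_gt0. by rewrite expnS; lia. Qed.

Lemma sum_dyadic_blocks (V : nmodType) (F : nat -> V) M :
  \sum_(0 <= t < (2 ^ M).-1) F t =
  \sum_(0 <= n < M) \sum_((2 ^ n).-1 <= t < (2 ^ n.+1).-1) F t.
Proof.
elim: M => [|M IH]; first by rewrite !big_geq.
rewrite big_nat_recr //= -IH (big_cat_nat (n := (2 ^ M).-1)) //.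
have : (0 < 2 ^ M)%N by rewrite expn_gt0.
by rewrite expnS; lia.
Qed.

Lemma ler_partial_sum (R : numFieldType) (u : nat -> R) m n :
  (forall k, 0 <= u k) -> (m <= n)%N ->
  \sum_(0 <= k < m) u k <= \sum_(0 <= k < n) u k.
Proof.
by move=> u_ge0 mn; apply: (nondecreasing_series (P := xpredT) (fun k _ _ => u_ge0 k) mn).
Qed.

Lemma sum_mul_le_mean_sqr (R : realFieldType) (u v : nat -> R) k :
  \sum_(0 <= m < k) u m * v m <=
    (\sum_(0 <= m < k) u m ^+ 2 + \sum_(0 <= m < k) v m ^+ 2) / 2.
Proof.
rewrite -big_split mulr_suml /=; apply: ler_sum => m _.
by have := sqr_ge0 (u m - v m); nra.
Qed.

Lemma sum_le_lim_series (R : realType) (u : nat -> R) :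
  (forall n, 0 <= u n) -> cvgn (series u) ->
  forall k, \sum_(0 <= m < k) u m <= limn (series u).
Proof.
move=> u_ge0 cvg_u k.
have mono : {homo series u : m n / (m <= n)%N >-> m <= n}.
  by move=> m n mn; rewrite seriesEnat /= ler_partial_sum.
by have := nondecreasing_cvgn_le mono cvg_u k; rewrite seriesEnat.
Qed.

Lemma sum_le_of_eventually_le (R : numFieldType) (u v : nat -> R) n0 (B : R) :
  (forall m, 0 <= u m) -> (forall m, 0 <= v m) ->
  (forall m, (n0 <= m)%N -> u m <= v m) ->
  (forall k, \sum_(0 <= m < k) v m <= B) ->
  forall k, \sum_(0 <= m < k) u m <= \sum_(0 <= m < n0) u m + B.
Proof.
move=> u_ge0 v_ge0 le_uv le_vB k.
apply: (le_trans (ler_partial_sum u_ge0 (leq_maxl k n0))).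
rewrite (big_cat_nat (n := n0)) ?leq_maxr //= lerD2l.
apply: le_trans (le_vB (maxn k n0)).
apply: (@le_trans _ _ (\sum_(n0 <= m < maxn k n0) v m)).
  by apply: ler_sum_nat => m /andP[n0m _]; apply: le_uv.
by rewrite [leRHS](big_cat_nat (n := n0)) ?leq_maxr //= lerDr sumr_ge0.
Qed.

Lemma threshold_drift_ub (R : realDomainType) (u c : nat -> R) (M J : R) :
  (forall k, 0 <= c k) ->
  (forall k, u k.+1 <= u k + J) ->
  (forall k, M <= u k -> u k.+1 <= u k + c k) ->
  forall k, u k <= Num.max (u 0%N) (M + J) + \sum_(0 <= m < k) c m.
Proof.
move=> c_ge0 stepJ stepc; elim=> [|k IH].
  by rewrite big_geq // addr0 le_max lexx.
rewrite big_nat_recr //=.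
have := c_ge0 k; have : 0 <= \sum_(0 <= m < k) c m by exact: sumr_ge0.
have [Mu|uM] := leP M (u k); first by have := stepc k Mu; lra.
have : M + J <= Num.max (u 0%N) (M + J) by rewrite le_max lexx orbT.
by have := stepJ k; lra.
Qed.

Lemma connect_propagate_le (R : realDomainType) (T : finType) (e : rel T)
    (h : T -> R) (C D : R) (j s : T) :
  0 <= C -> 0 <= D -> (forall u v, e u v -> h u <= C + D * h v) ->
  connect e j s -> h s <= C -> h j <= C * (D + 1) ^+ #|T|.
Proof.
move=> C_ge0 D_ge0 h_edge /connectP[p pth ->].
case: (shortenP pth) => {}p {}pth uniq_p _ hs.
have along q z : path e z q -> h (last z q) <= C -> h z <= C * (D + 1) ^+ size q.
  elim: q z => [|v q IH] z /=; first by rewrite expr0 mulr1.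
  move=> /andP[ezv pth_v] /(IH _ pth_v) hv; have := h_edge _ _ ezv.
  have : 1 <= (D + 1) ^+ size q by rewrite exprn_ege1 // lerDr.
  by rewrite exprS; nra.
apply: (le_trans (along _ _ pth hs)); rewrite ler_wpM2l // ler_weXn2l ?lerDr //.
have : (#|j :: p| <= #|T|)%N by apply: max_card.
by rewrite (card_uniqP uniq_p) /=; lia.
Qed.

Lemma strongly_connected_outdeg_gt0 (T : finType) (e : rel T) :
  (1 < #|T|)%N -> (forall i j, connect e i j) -> forall i, (0 < #|[pred j | e i j]|)%N.
Proof.
move=> T_gt1 conn i; have [l] : exists l, l \in predC1 i.
  by apply/card_gt0P; rewrite cardC1; lia.
rewrite !inE => il; have /connectP[[|z p] /= pth l_last] := conn i l.
  by rewrite l_last eqxx in il.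
by apply/card_gt0P; exists z; case/andP: pth.
Qed.

Lemma sum_imbalance (R : realType) (N : nat) (E : rel 'I_N) (w : 'I_N -> 'I_N -> R) :
  \sum_i imbalance E w i = 0.
Proof. by rewrite sumrB (exchange_big_dep xpredT) //= subrr. Qed.

Section DyadicSteps.
Variables (R : realType) (gamma : nat -> R).
Hypothesis gamma_dyadic : forall n k : nat,
  ((2 ^ n).-1 <= k <= (2 ^ n.+1).-2)%N -> gamma k = ((2 : R) ^+ n)^-1.

Lemma gamma_block n t :
  ((2 ^ n).-1 <= t < (2 ^ n.+1).-1)%N -> gamma t = ((2 : R) ^+ n)^-1.
Proof.
move=> t_in; apply: gamma_dyadic; move: t_in.
have : (0 < 2 ^ n)%N by rewrite expn_gt0.
by rewrite expnS; lia.
Qed.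

Lemma gamma_gt0 t : 0 < gamma t.
Proof. by have [n /gamma_block ->] := dyadic_block_of t; rewrite invr_gt0 exprn_gt0. Qed.

Lemma gamma_le1 t : gamma t <= 1.
Proof.
have [n /gamma_block ->] := dyadic_block_of t.
by rewrite invf_le1 ?exprn_gt0 // exprn_ege1 // ler1n.
Qed.

Lemma sum_gamma_block n : \sum_((2 ^ n).-1 <= t < (2 ^ n.+1).-1) gamma t = 1.
Proof.
rewrite (eq_big_nat _ _ (F2 := fun=> ((2 : R) ^+ n)^-1)) => [|t /gamma_block //].
by rewrite sumr_const_nat size_dyadic_block -[LHS]mulr_natl natrX mulfV // expf_neq0.
Qed.

Lemma sum_gamma_sqr_le2 k : \sum_(0 <= t < k) gamma t ^+ 2 <= 2.
Proof.
have gamma_sqr_ge0 t : 0 <= gamma t ^+ 2 by rewrite sqr_ge0.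
have k_le : (k <= (2 ^ k).-1)%N by have := ltn_expl k (isT : (1 < 2)%N); lia.
apply: (le_trans (ler_partial_sum gamma_sqr_ge0 k_le)); rewrite sum_dyadic_blocks.
have block_sqr n : \sum_((2 ^ n).-1 <= t < (2 ^ n.+1).-1) gamma t ^+ 2 = (2 ^-1) ^+ n.
  rewrite (eq_big_nat _ _ (F2 := fun t => gamma t * 2 ^- n)) => [|t /gamma_block gt].
    by rewrite -mulr_suml sum_gamma_block mul1r exprVn.
  by rewrite expr2 {2}gt.
under eq_big_nat => n _ do rewrite block_sqr.
have half_gt0 : (0 : R) < 2^-1 by rewrite invr_gt0.
have half_lt1 : `|(2 : R)^-1| < 1 by rewrite gtr0_norm // invf_lt1 // ltr1n.
have := geometric_le_lim k ler01 half_gt0 half_lt1.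
rewrite seriesEnat /=; under eq_bigr do rewrite mul1r.
by rewrite (_ : 1 / (1 - 2^-1) = 2 :> R) //; field.
Qed.
End DyadicSteps.

Section QuantizedConsensus.
Variables (R : realType) (N : nat) (E : rel 'I_N) (gamma : nat -> R)
  (a : nat -> 'I_N -> 'I_N -> R).
Hypothesis gamma_dyadic : forall n k : nat,
  ((2 ^ n).-1 <= k <= (2 ^ n.+1).-2)%N -> gamma k = ((2 : R) ^+ n)^-1.
Hypothesis a0 : forall i j, a 0%N i j = (if E j i then 1 else 0).
Hypothesis aS : forall k i j, E j i ->
  a k.+1 i j = a k i j + (if nflag E (a k) (gamma k) j then gamma k else 0).

Local Notation b k := (imbalance E (a k)).
Local Notation d i := ((outdeg E i)%:R : R).
Local Notation fires_at k := (nflag E (a k) (gamma k)).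

Definition increment k j : R := if fires_at k j then gamma k else 0.
Definition gain k j : R := \sum_(m < k) increment m j.

Lemma increment_ge0 k j : 0 <= increment k j.
Proof. by rewrite /increment; case: ifP => // _; apply/ltW/gamma_gt0. Qed.

Lemma gain_ge0 k j : 0 <= gain k j.
Proof. by apply: sumr_ge0 => m _; apply: increment_ge0. Qed.

Lemma gainS k j : gain k.+1 j = gain k j + increment k j.
Proof. by rewrite /gain big_ord_recr. Qed.

Lemma a_gain k i j : E j i -> a k i j = 1 + gain k j.
Proof.
move=> Eji; elim: k => [|k IH]; first by rewrite a0 Eji /gain big_ord0 addr0.
by rewrite aS // IH gainS addrA.
Qed.

Lemma imbalance_gain k i :
  b k i = \sum_(l | E l i) (1 + gain k l) - d i * (1 + gain k i).
Proof.
rewrite /imbalance (eq_bigr _ (fun l => @a_gain k i l)).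
rewrite (eq_bigr _ (fun l => @a_gain k l i)).
rewrite [X in _ - X](eq_bigl (fun l => l \in [pred l | E i l])) //.
by rewrite sumr_const mulr_natl.
Qed.

Lemma imbalanceS k i :
  b k.+1 i = b k i + \sum_(l | E l i) increment k l - d i * increment k i.
Proof.
rewrite !imbalance_gain gainS (eq_bigr (fun l => 1 + gain k l + increment k l)).
  by rewrite big_split /=; ring.
by move=> l _; rewrite gainS addrA.
Qed.

Lemma imbalanceS_ge k i : b k i <= b k.+1 i \/ 0 <= b k.+1 i.
Proof.
have : 0 <= \sum_(l | E l i) increment k l.
  by apply: sumr_ge0 => l _; apply: increment_ge0.
rewrite imbalanceS /increment; case: ifP => [fires|_] incr_ge0; last by left; lra.
by right; move: fires; rewrite /nflag; lra.
Qed.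

Lemma imbalance_ge0_persists k m i : (k <= m)%N -> 0 <= b k i -> 0 <= b m i.
Proof.
move=> /subnK <-; elim: (m - k)%N => [//|n IH] /IH b_ge0.
by case: (imbalanceS_ge (n + k) i) => //; apply: le_trans.
Qed.

Lemma gain_eq0_of_imbalance_lt0 k i : b k i < 0 -> gain k i = 0.
Proof.
move=> b_lt0; rewrite /gain big1 // => m _; rewrite /increment /nflag.
case: leP => // fires; move: b_lt0.
rewrite ltNge (imbalance_ge0_persists (ltnW (ltn_ord m))) //.
by apply: le_trans fires; rewrite mulr_ge0 ?ler0n // ltW ?gamma_gt0.
Qed.

Definition deficit k : R := \sum_i - Num.min (b k i) 0.

Lemma deficit_ge0 k : 0 <= deficit k.
Proof. by apply: sumr_ge0 => i _; rewrite oppr_ge0 ge_min lexx orbT. Qed.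

Lemma deficitE k : deficit k = \sum_i Num.max (b k i) 0.
Proof.
rewrite /deficit (eq_bigr (fun i => Num.max (b k i) 0 - b k i)) => [|i _].
  by rewrite sumrB sum_imbalance subr0.
by have := addr_max_min (b k i) 0; lra.
Qed.

Lemma imbalance_le_deficit k i : `|b k i| <= deficit k.
Proof.
rewrite ler_norml lerNl; apply/andP; split.
  rewrite /deficit (bigD1 i) //= -[X in X <= _]addr0 lerD ?lerN2 ?ge_min ?lexx //.
  by apply: sumr_ge0 => j _; rewrite oppr_ge0 ge_min lexx orbT.
rewrite deficitE (bigD1 i) //= -[X in X <= _]addr0 lerD ?le_max ?lexx //.
by apply: sumr_ge0 => j _; rewrite le_max lexx orbT.
Qed.

Lemma deficit_nonincreasing k m : (k <= m)%N -> deficit m <= deficit k.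
Proof.
move=> /subnK <-; elim: (m - k)%N => [//|n IH]; apply: le_trans IH.
rewrite addSn; apply: ler_sum => i _; rewrite lerN2 le_min !ge_min lexx orbT andbT.
by case: (imbalanceS_ge (n + k) i) => ->; rewrite ?orbT.
Qed.

Lemma exists_imbalance_lt0 k : deficit k != 0 -> exists s, b k s < 0.
Proof.
move=> deficit_neq0; apply/existsP; apply: contraNT deficit_neq0 => /existsPn no_neg.
by rewrite /deficit big1 // => i _; rewrite min_r ?oppr0 // leNgt no_neg.
Qed.

Hypothesis outdeg_gt0 : forall i, (0 < outdeg E i)%N.
Hypothesis connected : forall i j, connect E i j.

Lemma quiet_of_deficit_eq0 k j : deficit k = 0 -> ~~ fires_at k j.
Proof.
move=> deficit0; rewrite /nflag -ltNge; apply: le_lt_trans (ler_norm _) _.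
rewrite (le_lt_trans (imbalance_le_deficit k j)) // deficit0.
by rewrite mulr_gt0 ?ltr0n ?gamma_gt0.
Qed.

Definition edge_count : R := \sum_i d i.

Lemma edge_count_ge0 : 0 <= edge_count.
Proof. by apply: sumr_ge0 => i _; apply: ler0n. Qed.

Lemma outdeg_le_edge_count i : d i <= edge_count.
Proof. by rewrite /edge_count (bigD1 i) //= lerDl sumr_ge0. Qed.

Lemma gain_edge k j i : E j i ->
  gain k j <= (deficit 0 + edge_count) + edge_count * gain k i.
Proof.
move=> Eji.
have : 1 + gain k j <= \sum_(l | E l i) (1 + gain k l).
  rewrite (bigD1 j) //= lerDl sumr_ge0 // => l _.
  by rewrite addr_ge0 ?gain_ge0.
have -> : \sum_(l | E l i) (1 + gain k l) = b k i + d i * (1 + gain k i).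
  by rewrite imbalance_gain; ring.
have b_le : b k i <= deficit 0.
  apply: le_trans (ler_norm _) (le_trans (imbalance_le_deficit k i) _).
  exact: deficit_nonincreasing (leq0n k).
have := outdeg_le_edge_count i; have := gain_ge0 k i; have := ler0n R (outdeg E i).
by nra.
Qed.

Lemma gain_le_of_imbalance_lt0 k s j : b k s < 0 ->
  gain k j <= (deficit 0 + edge_count) * (edge_count + 1) ^+ N.
Proof.
move=> bs_lt0; rewrite -[N in _ ^+ N]card_ord.
have C_ge0 : 0 <= deficit 0 + edge_count by rewrite addr_ge0 ?deficit_ge0 ?edge_count_ge0.
apply: (connect_propagate_le C_ge0 edge_count_ge0 (gain_edge k) (connected j s)).
by rewrite gain_eq0_of_imbalance_lt0.
Qed.

Definition gain_bound : R := (deficit 0 + edge_count) * (edge_count + 1) ^+ N + 1.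

Lemma gain_bound_ge0 : 0 <= gain_bound.
Proof.
by rewrite addr_ge0 // mulr_ge0 ?exprn_ge0 ?addr_ge0 ?deficit_ge0 ?edge_count_ge0.
Qed.

Lemma gain_le_bound k j : gain k j <= gain_bound.
Proof.
elim: k j => [|k IH] j; first by rewrite /gain big_ord0 gain_bound_ge0.
have [_|/exists_imbalance_lt0[s bs_lt0]] := eqVneq (deficit k.+1) 0; last first.
  by apply: le_trans (gain_le_of_imbalance_lt0 j bs_lt0) _; rewrite lerDl.
rewrite gainS; have [deficit0|/exists_imbalance_lt0[s bs_lt0]] := eqVneq (deficit k) 0.
  by rewrite /increment (negbTE (quiet_of_deficit_eq0 j deficit0)) addr0.
apply: lerD; first exact: gain_le_of_imbalance_lt0 bs_lt0.
by rewrite /increment; case: ifP => _; rewrite ?gamma_le1.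
Qed.

Definition fires t := [exists j, fires_at t j].

Lemma deficit_le_quiet t : ~~ fires t -> deficit t <= edge_count * gamma t.
Proof.
move=> /existsPn quiet; rewrite deficitE /edge_count mulr_suml; apply: ler_sum => j _.
have lt_b : b t j < d j * gamma t by rewrite ltNge; apply: quiet.
by rewrite ge_max (ltW lt_b) mulr_ge0 ?ler0n // ltW ?gamma_gt0.
Qed.

Lemma gamma_fires_le t : gamma t * (fires t)%:R <= \sum_j increment t j.
Proof.
have incr_ge0 := increment_ge0 t.
have [/existsP[j fj]|_] := boolP (fires t); last by rewrite mulr0 sumr_ge0.
by rewrite mulr1 (bigD1 j) //= {1}/increment fj lerDl sumr_ge0.
Qed.

Lemma sum_gamma_fires_le k :
  \sum_(0 <= t < k) gamma t * (fires t)%:R <= N%:R * gain_bound.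
Proof.
apply: (@le_trans _ _ (\sum_j gain k j)).
  rewrite big_mkord /gain exchange_big /=.
  by apply: ler_sum => t _; apply: gamma_fires_le.
apply: le_trans (ler_sum _ (fun j _ => gain_le_bound k j)) _.
by rewrite sumr_const card_ord mulr_natl.
Qed.

Definition busy_block n := all fires (index_iota (2 ^ n).-1 (2 ^ n.+1).-1).

Lemma busy_blocks_eventually_absent :
  exists n0, forall n, (n0 <= n)%N -> ~~ busy_block n.
Proof.
pose B := Num.Def.archi_bound (N%:R * gain_bound).
apply: (@eventually_false_of_bounded_count _ B) => M.
have count_le : (\sum_(0 <= n < M) busy_block n)%:R <= N%:R * gain_bound.
  apply: le_trans (sum_gamma_fires_le (2 ^ M).-1); rewrite sum_dyadic_blocks natr_sum.
  apply: ler_sum => n _; have [/allP busy|_] := boolP (busy_block n).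
    rewrite (eq_big_nat _ _ (F2 := gamma)) ?sum_gamma_block // => t t_in.
    by rewrite busy ?mulr1 // mem_index_iota.
  by rewrite sumr_ge0 // => t _; rewrite mulr_ge0 ?ler0n ?ltW ?gamma_gt0.
have := archi_boundP (le_trans (ler0n _ _) count_le).
by rewrite -(ler_nat R) => /(le_lt_trans count_le)/ltW.
Qed.

Lemma deficit_eventually_le :
  exists m0, forall m, (m0 <= m)%N -> deficit m <= 2 * edge_count * gamma m.
Proof.
have [n0 not_busy] := busy_blocks_eventually_absent.
exists (2 ^ n0.+1).-1 => m m_ge; have [[|n] m_in] := dyadic_block_of m.
  have : (2 ^ 1 <= 2 ^ n0.+1)%N by rewrite leq_pexp2l.
  by move: m_in; rewrite expn1; lia.
have n0_le : (n0 <= n)%N.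
  rewrite leqNgt; apply/negP => lt_n.
  have : (2 ^ n.+2 <= 2 ^ n0.+1)%N by rewrite leq_pexp2l.
  lia.
have /allPn[t t_in quiet] := not_busy n n0_le.
move: t_in; rewrite mem_index_iota => t_in.
apply: le_trans (deficit_nonincreasing (_ : t <= m)%N) _; first lia.
apply: le_trans (deficit_le_quiet quiet) _.
rewrite (gamma_block gamma_dyadic t_in) (gamma_block gamma_dyadic m_in) exprS invfM.
by rewrite [X in _ <= X](_ : _ = edge_count * 2 ^- n) //; field.
Qed.

Variable alpha : nat -> R.
Hypothesis alpha_gt0 : forall k, 0 < alpha k.
Hypothesis alpha_sqr_summable : cvgn (series (fun k => alpha k ^+ 2)).

Lemma alpha_ge0 k : 0 <= alpha k.
Proof. exact/ltW. Qed.

Lemma sum_alpha_deficit_bounded :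
  exists B, forall k, \sum_(0 <= m < k) alpha m * deficit m <= B.
Proof.
have [m0 deficit_le_gamma] := deficit_eventually_le.
pose S := limn (series (fun k => alpha k ^+ 2)).
have gamma_ge0 m : 0 <= gamma m by apply/ltW/gamma_gt0.
eexists; apply: (@sum_le_of_eventually_le _ _
  (fun m => 2 * edge_count * (alpha m * gamma m)) m0 (2 * edge_count * ((S + 2) / 2))).
- by move=> m; rewrite mulr_ge0 ?alpha_ge0 ?deficit_ge0.
- by move=> m; rewrite !mulr_ge0 ?alpha_ge0 ?edge_count_ge0.
- by move=> m /deficit_le_gamma le_m; rewrite mulrCA ler_wpM2l ?alpha_ge0.
move=> k; rewrite -mulr_sumr ler_wpM2l ?mulr_ge0 ?edge_count_ge0 //.
apply: le_trans (sum_mul_le_mean_sqr _ _ _) _; rewrite ler_wpM2r ?invr_ge0 ?ler0n //.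
by rewrite lerD ?sum_gamma_sqr_le2 // sum_le_lim_series // => m; apply: sqr_ge0.
Qed.

Variables (qmin qmax : R) (x y : nat -> 'I_N -> R).
Hypothesis alpha_noninc : forall k, alpha k.+1 <= alpha k.
Hypothesis qmin_lt_qmax : qmin < qmax.
Hypothesis x_quantized : forall k i, x k i = qmin \/ x k i = qmax.
Hypothesis x_max_possible : forall k i, x k i = qmax -> 0 < prob_max qmin qmax (y k i).
Hypothesis x_min_possible : forall k i, x k i = qmin -> prob_max qmin qmax (y k i) < 1.
Hypothesis yS : forall k i, y k.+1 i = y k i
  + alpha k * (\sum_(j | E j i) a k i j * (x k j - x k i))
  + alpha k * (imbalance E (a k) i * x k i).

Lemma x_range k i : qmin <= x k i <= qmax.
Proof. by case: (x_quantized k i) => ->; rewrite lexx ltW. Qed.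

Lemma x_eq_qmax k i : qmax <= y k i -> x k i = qmax.
Proof.
move=> y_ge; case: (x_quantized k i) => // x_min; have := x_min_possible x_min.
rewrite /prob_max /sat (max_l (le_trans (ltW qmin_lt_qmax) y_ge)) (min_r y_ge).
by rewrite divff ?ltxx // subr_eq0 gt_eqF.
Qed.

Lemma x_eq_qmin k i : y k i <= qmin -> x k i = qmin.
Proof.
move=> y_le; case: (x_quantized k i) => // x_max; have := x_max_possible x_max.
by rewrite /prob_max /sat (max_r y_le) (min_l (ltW qmin_lt_qmax)) subrr mul0r ltxx.
Qed.

Lemma a_range k i j : E j i -> 0 <= a k i j <= 1 + gain_bound.
Proof. by move=> Eji; rewrite a_gain // lerD2l gain_le_bound addr_ge0 ?gain_ge0. Qed.

Definition qnorm : R := `|qmin| + `|qmax|.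

Lemma norm_x_le k i : `|x k i| <= qnorm.
Proof. by rewrite /qnorm; case: (x_quantized k i) => ->; rewrite ?lerDl ?lerDr. Qed.

Lemma norm_consensus_le k i :
  `|\sum_(j | E j i) a k i j * (x k j - x k i)|
    <= N%:R * ((1 + gain_bound) * (qmax - qmin)).
Proof.
have term_le j :
    E j i -> `|a k i j * (x k j - x k i)| <= (1 + gain_bound) * (qmax - qmin).
  move=> /(a_range k) /andP[a_ge0 a_le]; rewrite normrM ger0_norm //.
  have /andP[? ?] := x_range k j; have /andP[? ?] := x_range k i.
  by rewrite ler_pM // ler_norml; apply/andP; split; lra.
have bound_ge0 : 0 <= (1 + gain_bound) * (qmax - qmin).
  by apply: mulr_ge0; [rewrite addr_ge0 ?gain_bound_ge0 | rewrite subr_ge0 ltW].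
apply: le_trans (ler_norm_sum _ _ _) _; apply: le_trans (ler_sum _ term_le) _.
rewrite (eq_bigl (fun j => j \in [pred j | E j i])) // sumr_const -[leLHS]mulr_natl.
by rewrite ler_wpM2r // ler_nat -[X in (_ <= X)%N]card_ord max_card.
Qed.

Definition step_bound : R :=
  alpha 0%N * (N%:R * ((1 + gain_bound) * (qmax - qmin)) + deficit 0 * qnorm).

Lemma norm_y_step_le k i : `|y k.+1 i - y k i| <= step_bound.
Proof.
pose S := \sum_(j | E j i) a k i j * (x k j - x k i).
have -> : y k.+1 i - y k i = alpha k * (S + b k i * x k i) by rewrite yS /S; ring.
have alpha_le : alpha k <= alpha 0%N.
  by elim: k {S} => // k IH; apply: le_trans (alpha_noninc k) IH.
rewrite normrM gtr0_norm //; apply: ler_pM => //; first exact: ltW.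
apply: le_trans (ler_normD _ _) _; rewrite lerD ?norm_consensus_le // normrM.
rewrite ler_pM ?norm_x_le //.
exact: le_trans (imbalance_le_deficit k i) (deficit_nonincreasing (leq0n k)).
Qed.

Lemma y_step_above_qmax k i :
  qmax <= y k i -> y k.+1 i <= y k i + alpha k * deficit k * qnorm.
Proof.
move=> y_ge; have x_i := x_eq_qmax y_ge.
have S_le0 : \sum_(j | E j i) a k i j * (x k j - x k i) <= 0.
  rewrite x_i; apply: sumr_le0 => j /(a_range k)/andP[a_ge0 _].
  by rewrite mulr_ge0_le0 // subr_le0; case/andP: (x_range k j).
have bx_le : b k i * x k i <= deficit k * qnorm.
  apply: le_trans (ler_norm _) _.
  by rewrite normrM ler_pM ?norm_x_le ?imbalance_le_deficit.
by rewrite yS; have := alpha_gt0 k; nra.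
Qed.

Lemma y_step_below_qmin k i :
  y k i <= qmin -> - y k.+1 i <= - y k i + alpha k * deficit k * qnorm.
Proof.
move=> y_le; have x_i := x_eq_qmin y_le.
have S_ge0 : 0 <= \sum_(j | E j i) a k i j * (x k j - x k i).
  rewrite x_i; apply: sumr_ge0 => j /(a_range k)/andP[a_ge0 _].
  by rewrite mulr_ge0 // subr_ge0; case/andP: (x_range k j).
have bx_ge : - (b k i * x k i) <= deficit k * qnorm.
  apply: le_trans (ler_norm _) _.
  by rewrite normrN normrM ler_pM ?norm_x_le ?imbalance_le_deficit.
by rewrite yS; have := alpha_gt0 k; nra.
Qed.

Lemma y_bounded i : exists ymin ymax : R, forall k, ymin <= y k i <= ymax.
Proof.
have [B sum_le] := sum_alpha_deficit_bounded.
have qnorm_ge0 : 0 <= qnorm by rewrite addr_ge0.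
pose c m := alpha m * deficit m * qnorm.
have c_ge0 m : 0 <= c m by rewrite !mulr_ge0 ?alpha_ge0 ?deficit_ge0.
have sum_c k : \sum_(0 <= m < k) c m <= B * qnorm by rewrite -mulr_suml ler_wpM2r.
have step_up k : y k.+1 i <= y k i + step_bound.
  by have := norm_y_step_le k i; rewrite ler_norml => /andP[_]; lra.
have step_down k : - y k.+1 i <= - y k i + step_bound.
  by have := norm_y_step_le k i; rewrite ler_norml => /andP[+ _]; lra.
have up := threshold_drift_ub c_ge0 step_up (fun k => @y_step_above_qmax k i).
have step_bottom k : - qmin <= - y k i -> - y k.+1 i <= - y k i + c k.
  by rewrite lerN2 => /y_step_below_qmin.
have down := threshold_drift_ub c_ge0 step_down step_bottom.
exists (- (Num.max (- y 0%N i) (- qmin + step_bound) + B * qnorm)).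
exists (Num.max (y 0%N i) (qmax + step_bound) + B * qnorm) => k.
by have := up k; have := down k; have := sum_c k; lra.
Qed.

End QuantizedConsensus.

Theorem lemma10 (R : realType) (N : nat) (E : rel 'I_N)
  (qmin qmax : R) (alpha gamma : nat -> R)
  (a : nat -> 'I_N -> 'I_N -> R) (x y : nat -> 'I_N -> R) :
  (* graph: no self-loops, strongly connected *)
  (forall i, ~~ E i i) ->
  (forall i j, connect E i j) ->
  (* range condition *)
  qmin < qmax ->
  qmin <= (\sum_i y 0%N i) / N%:R <= qmax ->
  (* initial weights *)
  (forall i j, a 0%N i j = (if E j i then 1 else 0)) ->
  (* gamma(k) = 2^-n for 2^n - 1 <= k <= 2^(n+1) - 2 *)
  (forall (n k : nat), ((2 ^ n).-1 <= k <= (2 ^ n.+1).-2)%N ->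
      gamma k = ((2 : R) ^+ n)^-1) ->
  (* step sizes *)
  (forall k, 0 < alpha k) ->
  (forall k, alpha k.+1 <= alpha k) ->
  series alpha @ \oo --> +oo ->
  cvgn (series (fun k => alpha k ^+ 2)) ->
  (* quantized random choice: x_i(k) in {qmin, qmax}, each value taken
     with positive probability p_i(k) resp. 1 - p_i(k) (sample path in the
     support of the process) *)
  (forall k i, x k i = qmin \/ x k i = qmax) ->
  (forall k i, x k i = qmax -> 0 < prob_max qmin qmax (y k i)) ->
  (forall k i, x k i = qmin -> prob_max qmin qmax (y k i) < 1) ->
  (* weight update on the edges (j,i) *)
  (forall k i j, E j i ->
      a k.+1 i j = a k i j + (if nflag E (a k) (gamma k) j then gamma k else 0)) ->
  (* value update *)
  (forall k i, y k.+1 i = y k i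
      + alpha k * (\sum_(j | E j i) a k i j * (x k j - x k i))
      + alpha k * (imbalance E (a k) i * x k i)) ->
  forall i, exists ymin ymax : R, forall k, ymin <= y k i <= ymax.
Proof.
move=> no_loop connected qmin_lt_qmax _ a0 gamma_dyadic alpha_gt0 alpha_noninc _
  alpha_sqr_summable x_quantized x_max_possible x_min_possible aS yS i.
have [N_le1|N_gt1] := leqP N 1.
  have no_edge j l : E j l = false.
    have -> : j = l by apply: ord_inj; have := ltn_ord j; have := ltn_ord l; lia.
    exact: negbTE.
  exists (y 0%N i), (y 0%N i); elim=> [|k IH]; first by rewrite lexx.
  rewrite yS /imbalance !big_pred0 => [|j|j|j]; rewrite ?no_edge //.
  by rewrite subrr mul0r !mulr0 !addr0.
have card_gt1 : (1 < #|'I_N|)%N by rewrite card_ord.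
have outdeg_gt0 := strongly_connected_outdeg_gt0 card_gt1 connected.
exact: (y_bounded gamma_dyadic a0 aS outdeg_gt0 connected alpha_gt0
  alpha_sqr_summable alpha_noninc qmin_lt_qmax x_quantized x_max_possible
  x_min_possible yS).
Qed.
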